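(* Let $v\in\mathbb{Z}^d$ be primitive and $p$ an odd prime. Then $O_{v,p}=\bigsqcup_{h\in M}O_{v,p,h}$ (disjoint union of subsets of $\mathcal{Y}_p$), where $O_{v,p,h}=(\Delta K\times L_v(\mathbb{Z}_p))\cdot((k_v,h),(a_vk_vg_v,g_v^{-1}hg_v))\,\mathbb{G}(\mathbb{Z}[1/p])$.
   Context: Setup: $\mathbb{G}_1=\mathrm{SO}_d$, $\mathbb{G}_2=\mathrm{ASL}_{d-1}=\{\begin{pmatrix}g&*\\0&1\end{pmatrix}:g\in\mathrm{SL}_{d-1}\}$, $\mathbb{G}=\mathbb{G}_1\times\mathbb{G}_2$. Elements of $\mathbb{G}(\mathbb{R}\times\mathbb{Q}_p)$ are written $((g_{1,\infty},g_{1,p}),(g_{2,\infty},g_{2,p}))$ with $g_{i,\infty}\in\mathbb{G}_i(\mathbb{R})$, $g_{i,p}\in\mathbb{G}_i(\mathbb{Q}_p)$; $\mathbb{G}(\mathbb{Z}[1/p])$ is embedded diagonally, $(\gamma_1,\gamma_2)\mapsto((\gamma_1,\gamma_1),(\gamma_2,\gamma_2))$, and $\mathcal{Y}_p=\mathbb{G}(\mathbb{R}\times\mathbb{Q}_p)/\mathbb{G}(\mathbb{Z}[1/p])$. For primitive $v$: $\Lambda_v=v^\perp\cap\mathbb{Z}^d$; $H_v\le\mathrm{SO}_d$ the stabilizer of $v$; $g_v\in\mathrm{SL}_d(\mathbb{Z})$ a fixed matrix whose first $d-1$ columns form a positively oriented $\mathbb{Z}$-basis of $\Lambda_v$ (so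 $g_v^{-1}H_vg_v\le\mathrm{ASL}_{d-1}$); $L_v=\{(h,g_v^{-1}hg_v):h\in H_v\}\le\mathbb{G}$; $k_v\in\mathrm{SO}_d(\mathbb{R})$ fixed with $k_vv=\|v\|e_d$; $a_v=\mathrm{diag}(\|v\|^{-1/(d-1)},\dots,\|v\|^{-1/(d-1)},\|v\|)$, so that $a_vk_vg_v\in\mathrm{ASL}_{d-1}(\mathbb{R})$. With $e$ the identity, $O_{v,p}=((k_v,e),(a_vk_vg_v,e))\cdot L_v(\mathbb{R}\times\mathbb{Q}_p)\,\mathbb{G}(\mathbb{Z}[1/p])\subseteq\mathcal{Y}_p$. $M$ is a (finite) set of representatives of the double cosets in $H_v(\mathbb{Q}_p)=\bigsqcup_{h\in M}H_v(\mathbb{Z}_p)\,h\,H_v(\mathbb{Z}[1/p])$. $K=H_{e_d}(\mathbb{R})\cong\mathrm{SO}_{d-1}(\mathbb{R})$ and $\Delta K\times L_v(\mathbb{Z}_p)=\{((k,h'),(k,g_v^{-1}h'g_v)):k\in K,h'\in H_v(\mathbb{Z}_p)\}$, acting on $\mathcal{Y}_p$ from the left. *)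

From HB Require Import structures.
From mathcomp Require Import all_boot all_order all_algebra.
From mathcomp Require Import reals exp.
Set Implicit Arguments. Unset Strict Implicit. Unset Printing Implicit Defensive.
Import Order.TTheory GRing.Theory Num.Theory.
Local Open Scope ring_scope.

Definition padic_val (p : nat) (q : rat) : int :=
  (logn p `|numq q|%N)%:Z - (logn p `|denq q|%N)%:Z.

Definition padic_abs_rat (R : realType) (p : nat) (q : rat) : R :=
  if q == 0 then 0 else (p%:R : R) ^ (- padic_val p q).

(* (F, abs, iota) is a completion of Q w.r.t. |.|_p, i.e. F = Q_p. *)
Definition is_Qp (R : realType) (p : nat) (F : fieldType) (abs : F -> R)
    (iota : {rmorphism rat -> F}) : Prop :=
  [/\ (forall x, abs x = 0 <-> x = 0),
      (forall x, 0 <= abs x),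
      (forall x y, abs (x * y) = abs x * abs y),
      (forall x y, abs (x + y) <= Num.max (abs x) (abs y)) &
      (forall q, abs (iota q) = padic_abs_rat R p q)] /\
  (
(forall x (e : R), 0 < e -> exists q, abs (x - iota q) < e) /\
      (forall u : nat -> F,
         (forall e : R, 0 < e -> exists N, forall m k, (N <= m)%N -> (N <= k)%N ->
             abs (u m - u k) < e) ->
         exists l, forall e : R, 0 < e -> exists N, forall m, (N <= m)%N ->
             abs (u m - l) < e)).

Definition inZp (R : realType) (F : fieldType) (abs : F -> R) (x : F) : Prop :=
  abs x <= 1.

Definition inZ1p (p : nat) (q : rat) : Prop := exists k : nat, denq q = (p ^ k)%:Z.

(* ---------- matrix groups (d = n.+2) ---------- *)
Definition SOmx (T : comNzRingType) (m : nat) (A : 'M[T]_m) : Prop :=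
  A^T *m A = 1%:M /\ \det A = 1.

(* ASL_{d-1} = { [g *; 0 1] : g in SL_{d-1} } *)
Definition ASLmx (T : comNzRingType) (n : nat) (A : 'M[T]_(n.+2)) : Prop :=
  \det A = 1 /\ row ord_max A = delta_mx 0 ord_max.

Definition e_last (T : comNzRingType) (n : nat) : 'cV[T]_(n.+2) := delta_mx ord_max 0.

Definition primitive (n : nat) (v : 'cV[int]_(n.+2)) : Prop :=
  forall c : int, (forall i, (c %| v i ord0)%Z) -> `|c| = 1.

Definition intmx (T : comNzRingType) (m m' : nat) (A : 'M[int]_(m, m')) : 'M[T]_(m, m') :=
  map_mx (fun z : int => z%:~R) A.

Definition inHv (T : comNzRingType) (n : nat) (v : 'cV[int]_(n.+2)) (A : 'M[T]_(n.+2)) : Prop :=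
  SOmx A /\ A *m intmx T v = intmx T v.

Definition normv (R : realType) (n : nat) (v : 'cV[int]_(n.+2)) : R :=
  Num.sqrt (\sum_i ((v i 0)%:~R : R) ^+ 2).

Definition a_v (R : realType) (n : nat) (v : 'cV[int]_(n.+2)) : 'M[R]_(n.+2) :=
  diag_mx (\row_(i < n.+2) (if i == ord_max then normv R v
                            else powR (normv R v) (- (n.+1%:R)^-1))).

(* g_v in SL_d(Z) whose first d-1 columns form a positively oriented Z-basis of
   Lambda_v = v^perp \cap Z^d *)
Definition good_gv (n : nat) (v : 'cV[int]_(n.+2)) (gv : 'M[int]_(n.+2)) : Prop :=
  [/\ \det gv = 1,
      (forall i : 'I_(n.+2), i != ord_max -> (gv^T *m v) i 0 = 0),
      (forall w : 'cV[int]_(n.+2), w^T *m v = 0 ->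
          exists c : 'cV[int]_(n.+2), c ord_max 0 = 0 /\ w = gv *m c) &
      0 < \det (\matrix_(i, j) (if j == ord_max then v i 0 else gv i j))].

Definition good_kv (R : realType) (n : nat) (v : 'cV[int]_(n.+2)) (kv : 'M[R]_(n.+2)) : Prop :=
  SOmx kv /\ kv *m intmx R v = normv R v *: e_last R n.

(* ---------- G(R x Q_p) = (SO_d x ASL_{d-1})(R x Q_p) ---------- *)
Record Gel (R : realType) (F : fieldType) (n : nat) := MkG {
  g1r : 'M[R]_(n.+2); g1p : 'M[F]_(n.+2); g2r : 'M[R]_(n.+2); g2p : 'M[F]_(n.+2) }.

Definition gmul (R : realType) (F : fieldType) (n : nat) (x y : Gel R F n) : Gel R F n :=
  MkG (g1r x *m g1r y) (g1p x *m g1p y) (g2r x *m g2r y) (g2p x *m g2p y).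

Definition inG (R : realType) (F : fieldType) (n : nat) (x : Gel R F n) : Prop :=
  [/\ SOmx (g1r x), SOmx (g1p x), ASLmx (g2r x) & ASLmx (g2p x)].

Definition inGZ1p (p n : nat) (c1 c2 : 'M[rat]_(n.+2)) : Prop :=
  [/\ forall i j, inZ1p p (c1 i j), forall i j, inZ1p p (c2 i j), SOmx c1 & ASLmx c2].

Definition gam (R : realType) (F : fieldType) (iota : {rmorphism rat -> F}) (n : nat)
    (c1 c2 : 'M[rat]_(n.+2)) : Gel R F n :=
  MkG (map_mx (fun q => ratr q) c1) (map_mx iota c1) (map_mx (fun q => ratr q) c2) (map_mx iota c2).

Definition conjg_v (T : comUnitRingType) (n : nat) (gv : 'M[int]_(n.+2)) (h : 'M[T]_(n.+2)) :=
  invmx (intmx T gv) *m h *m intmx T gv.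

Definition inLv (R : realType) (F : fieldType) (n : nat) (v : 'cV[int]_(n.+2))
    (gv : 'M[int]_(n.+2)) (x : Gel R F n) : Prop :=
  exists hr hp, [/\ inHv v hr, inHv v hp & x = MkG hr hp (conjg_v gv hr) (conjg_v gv hp)].

(* preimage in G(R x Q_p) of O_{v,p} *)
Definition inO (R : realType) (F : fieldType) (p : nat) (iota : {rmorphism rat -> F}) (n : nat)
    (v : 'cV[int]_(n.+2)) (gv : 'M[int]_(n.+2)) (kv : 'M[R]_(n.+2)) (x : Gel R F n) : Prop :=
  exists l c1 c2, [/\ inLv v gv l, inGZ1p p c1 c2 &
    x = gmul (gmul (MkG kv 1%:M (a_v R v *m kv *m intmx R gv) 1%:M) l) (gam R iota c1 c2)].

Definition inK (R : realType) (n : nat) (k : 'M[R]_(n.+2)) : Prop :=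
  SOmx k /\ k *m e_last R n = e_last R n.

Definition inHvZp (R : realType) (F : fieldType) (abs : F -> R) (n : nat)
    (v : 'cV[int]_(n.+2)) (h : 'M[F]_(n.+2)) : Prop :=
  inHv v h /\ forall i j, inZp abs (h i j).

Definition inHvZ1p (p n : nat) (v : 'cV[int]_(n.+2)) (c : 'M[rat]_(n.+2)) : Prop :=
  inHv v c /\ forall i j, inZ1p p (c i j).

(* preimage in G(R x Q_p) of O_{v,p,h} *)
Definition inOh (R : realType) (F : fieldType) (p : nat) (abs : F -> R)
    (iota : {rmorphism rat -> F}) (n : nat)
    (v : 'cV[int]_(n.+2)) (gv : 'M[int]_(n.+2)) (kv : 'M[R]_(n.+2))
    (h : 'M[F]_(n.+2)) (x : Gel R F n) : Prop :=
  exists k h' c1 c2, [/\ inK k, inHvZp abs v h', inGZ1p p c1 c2 &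
    x = gmul (gmul (MkG k h' k (conjg_v gv h'))
                   (MkG kv h (a_v R v *m kv *m intmx R gv) (conjg_v gv h)))
             (gam R iota c1 c2)].

Definition inDC (R : realType) (F : fieldType) (p : nat) (abs : F -> R)
    (iota : {rmorphism rat -> F}) (n : nat) (v : 'cV[int]_(n.+2))
    (h g : 'M[F]_(n.+2)) : Prop :=
  exists a c, [/\ inHvZp abs v a, inHvZ1p p v c & g = a *m h *m map_mx iota c].

Definition double_coset_reps (R : realType) (F : fieldType) (p : nat) (abs : F -> R)
    (iota : {rmorphism rat -> F}) (n : nat) (v : 'cV[int]_(n.+2))
    (M : seq 'M[F]_(n.+2)) : Prop :=
  [/\ (forall h, h \in M -> inHv v h),
      (forall g, inHv v g -> exists2 h, h \in M & inDC p abs iota v h g) &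
      (forall h h', h \in M -> h' \in M -> h <> h' ->
          forall g, inDC p abs iota v h g -> inDC p abs iota v h' g -> False)].

From Pilot Require Import Defs.
From HB Require Import structures.
From mathcomp Require Import all_boot all_order all_algebra.
From mathcomp Require Import reals exp.
Import Order.TTheory GRing.Theory Num.Theory.
Local Open Scope ring_scope.
Set Implicit Arguments. Unset Strict Implicit.

(* A point of O_{v,p} is the base point translated by (h_r, h_p) in L_v(R x Q_p).
   Split h_p = a h c with a in H_v(Z_p), h in M and c in H_v(Z[1/p]).  The lattice
   factor c is absorbed into G(Z[1/p]), since (c, g_v^-1 c g_v) is the diagonal image
   of an element of L_v(Z[1/p]); the real factor h_r c^-1 is moved to the left, where
   conjugation by k_v identifies H_v(R) with K and K commutes with a_v.  Conversely
   every translate by Delta K x L_v(Z_p) is of this form.  For disjointness, two such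
   representations of one point force h' in H_v(Z_p) h H_v(Z[1/p]): the rational
   factor fixes v because its real image is k_v-conjugate to an element of K.
   Only the ultrametric absolute value of Q_p is used, not the oddness of p. *)

Section SpecialOrthogonal.
Variables (T : comUnitRingType) (m : nat).
Implicit Types A B : 'M[T]_m.

Lemma SOmx_mulmx_tr A : SOmx A -> A *m A^T = 1%:M.
Proof. by case=> /mulmx1C. Qed.

Lemma SOmxM A B : SOmx A -> SOmx B -> SOmx (A *m B).
Proof.
case=> tAA dA [tBB dB]; split; last by rewrite det_mulmx dA dB mulr1.
by rewrite trmx_mul mulmxA -(mulmxA B^T) tAA mulmx1 tBB.
Qed.

Lemma SOmx_tr A : SOmx A -> SOmx A^T.
Proof. by move=> sA; split; [rewrite trmxK SOmx_mulmx_tr | rewrite det_tr; case: sA]. Qed.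

Lemma SOmx1 : SOmx (1%:M : 'M[T]_m).
Proof. by split; rewrite ?trmx1 ?mulmx1 ?det1. Qed.

Lemma SOmx_map (T' : comUnitRingType) (f : {rmorphism T -> T'}) A :
  SOmx A -> SOmx (map_mx f A).
Proof.
by case=> tAA dA; split; rewrite ?det_map_mx ?dA ?rmorph1 // map_trmx -map_mxM tAA map_mx1.
Qed.

End SpecialOrthogonal.

Lemma ASLmxM (T : comNzRingType) n (A B : 'M[T]_(n.+2)) :
  ASLmx A -> ASLmx B -> ASLmx (A *m B).
Proof.
by case=> dA rA [dB rB]; split; rewrite ?det_mulmx ?dA ?dB ?mulr1 // row_mul rA -rowE.
Qed.

Section IntegerMatrices.
Variable T : comNzRingType.

Lemma map_intmx (T' : comNzRingType) (f : {rmorphism T -> T'}) m m' (A : 'M[int]_(m, m')) :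
  map_mx f (intmx T A) = intmx T' A.
Proof. by apply/matrixP => i j; rewrite !mxE rmorph_int. Qed.

Lemma intmxM m1 m2 m3 (A : 'M[int]_(m1, m2)) (B : 'M[int]_(m2, m3)) :
  intmx T (A *m B) = intmx T A *m intmx T B.
Proof. exact: (map_mxM (intr : {rmorphism int -> T})). Qed.

Lemma det_intmx m (A : 'M[int]_m) : \det (intmx T A) = (\det A)%:~R.
Proof. exact: (det_map_mx (intr : {rmorphism int -> T})). Qed.

End IntegerMatrices.

Lemma intmx_unit (T : comUnitRingType) m (g : 'M[int]_m) : \det g = 1 -> intmx T g \in unitmx.
Proof. by move=> dg; rewrite unitmxE det_intmx dg unitr1. Qed.

Section Stabiliser.
Variables (n : nat) (v : 'cV[int]_(n.+2)).

Lemma inHvM (T : comUnitRingType) (A B : 'M[T]_(n.+2)) :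
  inHv v A -> inHv v B -> inHv v (A *m B).
Proof. by case=> sA fA [sB fB]; split; [exact: SOmxM | rewrite -mulmxA fB fA]. Qed.

Lemma inHv_tr (T : comUnitRingType) (A : 'M[T]_(n.+2)) : inHv v A -> inHv v A^T.
Proof.
case=> sA fA; split; first exact: SOmx_tr.
by rewrite -{1}fA mulmxA; case: sA => -> _; rewrite mul1mx.
Qed.

Lemma inHv1 (T : comUnitRingType) : inHv v (1%:M : 'M[T]_(n.+2)).
Proof. by split; [exact: SOmx1 | rewrite mul1mx]. Qed.

Lemma inHv_map (T T' : comUnitRingType) (f : {rmorphism T -> T'}) (A : 'M[T]_(n.+2)) :
  inHv v A -> inHv v (map_mx f A).
Proof.
by case=> sA fA; split; [exact: SOmx_map | rewrite -(map_intmx f) -map_mxM fA].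
Qed.

Lemma inHv_map_inj (E : fieldType) (T' : comUnitRingType) (f : {rmorphism E -> T'})
    (A : 'M[E]_(n.+2)) :
  inHv v (map_mx f A) -> inHv v A.
Proof.
case=> [[tAA dA] fA]; split; first split.
- by apply: (@map_mx_inj _ _ f); rewrite map_mxM -map_trmx tAA map_mx1.
- by apply: (fmorph_inj f); rewrite -det_map_mx dA rmorph1.
- by apply: (@map_mx_inj _ _ f); rewrite map_mxM map_intmx.
Qed.

End Stabiliser.

Section Conjugation.
Variables (n : nat) (gv : 'M[int]_(n.+2)).
Hypothesis det_gv : \det gv = 1.

Lemma conjg_vM (T : comUnitRingType) (A B : 'M[T]_(n.+2)) :
  conjg_v gv (A *m B) = conjg_v gv A *m conjg_v gv B.
Proof.
by rewrite /conjg_v !mulmxA mulmxK ?intmx_unit.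
Qed.

Lemma det_conjg_v (T : comUnitRingType) (A : 'M[T]_(n.+2)) : \det (conjg_v gv A) = \det A.
Proof. by rewrite !det_mulmx det_inv det_intmx det_gv invr1 mul1r mulr1. Qed.

Lemma map_conjg_v (E : fieldType) (T : comUnitRingType) (f : {rmorphism E -> T})
    (A : 'M[E]_(n.+2)) :
  map_mx f (conjg_v gv A) = conjg_v gv (map_mx f A).
Proof. by rewrite /conjg_v !map_mxM map_invmx !map_intmx. Qed.

End Conjugation.

Lemma intmx_primitive_neq0 (T : numDomainType) n (v : 'cV[int]_(n.+2)) :
  primitive v -> intmx T v != 0.
Proof.
move=> prim_v; apply/eqP => /matrixP v0.
have /eqP : `|0 : int| = 1.
  by apply: prim_v => i; have /eqP := v0 i 0; rewrite !mxE intr_eq0 => /eqP ->.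
by rewrite normr0.
Qed.

Lemma conjg_v_ASLmx (T : numFieldType) n (v : 'cV[int]_(n.+2)) gv (A : 'M[T]_(n.+2)) :
  primitive v -> good_gv v gv -> inHv v A -> ASLmx (conjg_v gv A).
Proof.
move=> prim_v [det_gv gv_perp _ _] hA; split.
  by rewrite det_conjg_v //; case: hA => -[].
(* g_v^T v = t e_d with t != 0, so e_d^T is proportional to v^T g_v, and v^T A = v^T. *)
set G := intmx T gv; set w := intmx T v.
set t : T := ((gv^T *m v) ord_max 0)%:~R.
have GTw : G^T *m w = t *: e_last T n.
  rewrite /G /w /intmx map_trmx -/(intmx T _) -intmxM; apply/matrixP => i j.
  rewrite (ord1 j) [LHS]mxE [RHS]mxE /e_last [delta_mx _ _ _ _]mxE eqxx andbT.
  have [->|ni] := eqVneq i ord_max; first by rewrite mulr1.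
  by rewrite mulr0 gv_perp.
have t_neq0 : t != 0.
  apply: contraNneq (intmx_primitive_neq0 T prim_v) => t0.
  by rewrite -/w -[w](mulKmx (x := G^T)) ?unitmx_tr ?intmx_unit // GTw t0 scale0r mulmx0.
have eT : delta_mx 0 ord_max = t^-1 *: (w^T *m G).
  by rewrite -[w^T *m G]trmxK trmx_mul trmxK GTw linearZ /= scalerA mulVf // scale1r trmx_delta.
have wTA : w^T *m A = w^T.
  by case: (inHv_tr hA) => _ /(congr1 trmx); rewrite trmx_mul trmxK.
rewrite rowE {1}eT -scalemxAl /conjg_v -/G !mulmxA -(mulmxA _ G) mulmxV ?intmx_unit //.
by rewrite mulmx1 wTA -eT.
Qed.

Section ZOneOverP.
Variable p : nat.
Hypothesis p_prime : prime p.

Lemma inZ1pP q : inZ1p p q <-> exists k (z : int), q * p%:R ^+ k = z%:~R.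
Proof.
split=> [[k dq] | [k [z qpk]]].
  by exists k, (numq q); rewrite numqE dq -pmulrn natrX.
have num_pk : numq q * (p ^ k)%N%:Z = z * denq q.
  by apply: (@intr_inj rat); rewrite !intrM numqE -qpk -pmulrn natrX mulrAC.
have /dvdn_pfactor[//|j _ dq] : (`|denq q| %| p ^ k)%N.
  rewrite -(@Gauss_dvdr _ `|numq q|); last by rewrite coprime_sym coprime_num_den.
  by rewrite -[(p ^ k)%N]/(`|(p ^ k)%N%:Z|%N) -abszM num_pk abszM dvdn_mull.
by exists j; rewrite -absz_denq dq.
Qed.

Lemma inZ1p_int (z : int) : inZ1p p z%:~R.
Proof. by exists 0%N; rewrite denq_int. Qed.

Lemma inZ1pD a b : inZ1p p a -> inZ1p p b -> inZ1p p (a + b).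
Proof.
move=> /inZ1pP[k [y ay]] /inZ1pP[l [z bz]]; apply/inZ1pP.
exists (k + l)%N, (y * (p ^ l)%N%:Z + z * (p ^ k)%N%:Z).
rewrite intrD !intrM -ay -bz -!pmulrn !natrX exprD mulrDl !mulrA.
by congr (_ + _); rewrite -!mulrA [_ ^+ k * _]mulrC.
Qed.

Lemma inZ1pM a b : inZ1p p a -> inZ1p p b -> inZ1p p (a * b).
Proof.
move=> /inZ1pP[k [y ay]] /inZ1pP[l [z bz]]; apply/inZ1pP.
by exists (k + l)%N, (y * z); rewrite intrM -ay -bz exprD mulrACA.
Qed.

Definition mxZ1p m m' (A : 'M[rat]_(m, m')) := forall i j, inZ1p p (A i j).

Lemma mxZ1pM m1 m2 m3 (A : 'M[rat]_(m1, m2)) (B : 'M[rat]_(m2, m3)) :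
  mxZ1p A -> mxZ1p B -> mxZ1p (A *m B).
Proof.
move=> hA hB i j; rewrite mxE; apply: (big_ind (inZ1p p)).
- exact: (inZ1p_int 0).
- exact: inZ1pD.
- by move=> k _; apply: inZ1pM.
Qed.

Lemma mxZ1p_tr m m' (A : 'M[rat]_(m, m')) : mxZ1p A -> mxZ1p A^T.
Proof. by move=> hA i j; rewrite mxE. Qed.

Lemma mxZ1p_intmx m m' (A : 'M[int]_(m, m')) : mxZ1p (intmx rat A).
Proof. by move=> i j; rewrite mxE; apply: inZ1p_int. Qed.

Lemma mxZ1p1 m : mxZ1p (1%:M : 'M[rat]_m).
Proof. by move=> i j; rewrite mxE; exact: (inZ1p_int (i == j)). Qed.

Lemma mxZ1p_conjg_v n (g : 'M[int]_(n.+2)) (A : 'M[rat]_(n.+2)) :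
  \det g = 1 -> mxZ1p A -> mxZ1p (conjg_v g A).
Proof.
move=> dg hA; rewrite /conjg_v; apply: mxZ1pM; last exact: mxZ1p_intmx.
apply: mxZ1pM hA; rewrite /invmx intmx_unit // det_intmx dg invr1 scale1r.
by rewrite /intmx -(map_mx_adj (intr : {rmorphism int -> rat})); apply: mxZ1p_intmx.
Qed.

End ZOneOverP.

Section PAdicIntegers.
Variables (R : realType) (F : fieldType) (abs : F -> R).
Hypotheses (abs_eq0 : forall x, abs x = 0 <-> x = 0) (abs_ge0 : forall x, 0 <= abs x)
  (absM : forall x y, abs (x * y) = abs x * abs y)
  (abs_ultra : forall x y, abs (x + y) <= Num.max (abs x) (abs y)).

Lemma inZp0 : Defs.inZp abs 0.
Proof. by rewrite /Defs.inZp (proj2 (abs_eq0 0)). Qed.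

Lemma inZp1 : Defs.inZp abs 1.
Proof.
have abs1_neq0 : abs 1 != 0 by apply/eqP => /abs_eq0/eqP; rewrite oner_eq0.
by rewrite /Defs.inZp -[abs 1](mulfK abs1_neq0) -absM mulr1 divff.
Qed.

Lemma inZpD x y : Defs.inZp abs x -> Defs.inZp abs y -> Defs.inZp abs (x + y).
Proof. by move=> hx hy; apply: le_trans (abs_ultra x y) _; rewrite ge_max hx hy. Qed.

Lemma inZpM x y : Defs.inZp abs x -> Defs.inZp abs y -> Defs.inZp abs (x * y).
Proof. by move=> hx hy; rewrite /Defs.inZp absM mulr_ile1. Qed.

Definition mxZp m m' (A : 'M[F]_(m, m')) := forall i j, Defs.inZp abs (A i j).

Lemma mxZpM m1 m2 m3 (A : 'M[F]_(m1, m2)) (B : 'M[F]_(m2, m3)) :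
  mxZp A -> mxZp B -> mxZp (A *m B).
Proof.
move=> hA hB i j; rewrite mxE; apply: (big_ind (Defs.inZp abs)).
- exact: inZp0.
- exact: inZpD.
- by move=> k _; apply: inZpM.
Qed.

Lemma mxZp_tr m m' (A : 'M[F]_(m, m')) : mxZp A -> mxZp A^T.
Proof. by move=> hA i j; rewrite mxE. Qed.

Lemma mxZp1 m : mxZp (1%:M : 'M[F]_m).
Proof. by move=> i j; rewrite mxE; case: (i == j); [exact: inZp1 | exact: inZp0]. Qed.

End PAdicIntegers.

Lemma fix_last_diag_mx_commute (T : comNzRingType) n (k : 'M[T]_(n.+2)) (d : 'rV[T]_(n.+2)) :
    k *m e_last T n = e_last T n -> (e_last T n)^T *m k = (e_last T n)^T ->
    (forall i j, i != ord_max -> j != ord_max -> d 0 i = d 0 j) ->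
  k *m diag_mx d = diag_mx d *m k.
Proof.
move=> /matrixP k_col /matrixP k_row d_const.
have k_col' i : k i ord_max = (i == ord_max)%:R.
  by have := k_col i 0; rewrite /e_last -colE !mxE eqxx andbT.
have k_row' j : k ord_max j = (j == ord_max)%:R.
  by have := k_row 0 j; rewrite /e_last trmx_delta -rowE !mxE eqxx.
apply/matrixP => i j; rewrite mul_mx_diag mul_diag_mx !mxE.
have [->|ni] := eqVneq i ord_max; have [->|nj] := eqVneq j ord_max.
- exact: mulrC.
- by rewrite k_row' (negPf nj) mul0r mulr0.
- by rewrite k_col' (negPf ni) mul0r mulr0.
- by rewrite mulrC (d_const _ _ ni nj).
Qed.

Lemma inK_a_v_commute (R : realType) n (v : 'cV[int]_(n.+2)) (k : 'M[R]_(n.+2)) :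
  inK k -> k *m a_v R v = a_v R v *m k.
Proof.
case=> -[kTk _] ke; apply: fix_last_diag_mx_commute => //.
- by rewrite -{1}ke trmx_mul -mulmxA kTk mulmx1.
- by move=> i j ni nj; rewrite !mxE (negPf ni) (negPf nj).
Qed.

Lemma inDC_refl (R : realType) (F : fieldType) p (abs : F -> R) (iota : {rmorphism rat -> F})
    n (v : 'cV[int]_(n.+2)) (h : 'M[F]_(n.+2)) :
  is_Qp p abs iota -> inHv v h -> inDC p abs iota v h h.
Proof.
move=> [[abs_eq0 _ absM _ _] _] h_Hv; exists 1%:M, 1%:M; split.
- by split; [exact: inHv1 | exact: mxZp1].
- by split; [exact: inHv1 | exact: mxZ1p1].
- by rewrite map_mx1 mul1mx mulmx1.
Qed.

Lemma inGZ1pM p n (c1 c2 d1 d2 : 'M[rat]_(n.+2)) : prime p ->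
  inGZ1p p c1 c2 -> inGZ1p p d1 d2 -> inGZ1p p (c1 *m d1) (c2 *m d2).
Proof.
move=> p_prime [c1Z c2Z c1SO c2ASL] [d1Z d2Z d1SO d2ASL].
split; [exact: mxZ1pM | exact: mxZ1pM | exact: SOmxM | exact: ASLmxM].
Qed.

Lemma inGZ1p_conjg_v p n (v : 'cV[int]_(n.+2)) gv (c : 'M[rat]_(n.+2)) :
    prime p -> primitive v -> good_gv v gv ->
  inHvZ1p p v c -> inGZ1p p c (conjg_v gv c).
Proof.
move=> p_prime prim_v hgv [c_Hv cZ]; split=> //; last exact: conjg_v_ASLmx c_Hv.
- by apply: mxZ1p_conjg_v => //; case: hgv.
- by case: c_Hv.
Qed.

Lemma gmulA (R : realType) (F : fieldType) n (x y z : Gel R F n) :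
  gmul (gmul x y) z = gmul x (gmul y z).
Proof. by rewrite /gmul /= !mulmxA. Qed.

Lemma gamM (R : realType) (F : fieldType) (iota : {rmorphism rat -> F}) n
    (c1 c2 d1 d2 : 'M[rat]_(n.+2)) :
  gam R iota (c1 *m d1) (c2 *m d2) = gmul (gam R iota c1 c2) (gam R iota d1 d2).
Proof. by rewrite /gam /gmul /= !map_mxM. Qed.

Lemma normv_neq0 (R : realType) n (v : 'cV[int]_(n.+2)) (kv : 'M[R]_(n.+2)) :
  primitive v -> good_kv v kv -> normv R v != 0.
Proof.
move=> prim_v [[kvTkv _] kv_v]; apply: contraNneq (intmx_primitive_neq0 R prim_v) => v0.
by rewrite -[intmx R v]mul1mx -kvTkv -mulmxA kv_v v0 scale0r mulmx0.
Qed.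

Section Orbit.
Variables (R : realType) (F : fieldType) (p : nat) (abs : F -> R).
Variables (iota : {rmorphism rat -> F}) (n : nat) (v : 'cV[int]_(n.+2)).
Variables (gv : 'M[int]_(n.+2)) (kv : 'M[R]_(n.+2)).
Hypotheses (p_prime : prime p) (prim_v : primitive v).
Hypotheses (hgv : good_gv v gv) (hkv : good_kv v kv).

Let det_gv : \det gv = 1. Proof. by case: hgv. Qed.
Let kvTkv : kv^T *m kv = 1%:M. Proof. by case: hkv => -[]. Qed.
Let kvkvT : kv *m kv^T = 1%:M. Proof. by case: hkv => /SOmx_mulmx_tr. Qed.

Definition Lv_of (hr : 'M[R]_(n.+2)) (hp : 'M[F]_(n.+2)) : Gel R F n :=
  MkG hr hp (conjg_v gv hr) (conjg_v gv hp).

Definition basept : Gel R F n := MkG kv 1%:M (a_v R v *m kv *m intmx R gv) 1%:M.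

Definition shifted_basept (h : 'M[F]_(n.+2)) : Gel R F n :=
  MkG kv h (a_v R v *m kv *m intmx R gv) (conjg_v gv h).

Definition DeltaK_Lv (k : 'M[R]_(n.+2)) (h : 'M[F]_(n.+2)) : Gel R F n :=
  MkG k h k (conjg_v gv h).

Lemma Lv_ofM hr hp hr' hp' :
  gmul (Lv_of hr hp) (Lv_of hr' hp') = Lv_of (hr *m hr') (hp *m hp').
Proof. by rewrite /gmul /Lv_of /= !conjg_vM. Qed.

Lemma gam_conjg_v (c : 'M[rat]_(n.+2)) :
  gam R iota c (conjg_v gv c) = Lv_of (map_mx ratr c) (map_mx iota c).
Proof. by rewrite /gam /Lv_of !map_conjg_v. Qed.

Lemma conjg_kvK (g : 'M[R]_(n.+2)) : kv^T *m (kv *m g *m kv^T) *m kv = g.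
Proof. by rewrite !mulmxA kvTkv mul1mx -mulmxA kvTkv mulmx1. Qed.

Lemma DeltaK_Lv_shifted k h' h : inK k ->
  gmul (DeltaK_Lv k h') (shifted_basept h) = gmul basept (Lv_of (kv^T *m k *m kv) (h' *m h)).
Proof.
move=> k_K; rewrite /gmul /DeltaK_Lv /shifted_basept /basept /Lv_of /=.
congr MkG; rewrite ?mul1mx ?conjg_vM //.
  by rewrite !mulmxA kvkvT mul1mx.
rewrite /conjg_v !mulmxA !mulmxK ?intmx_unit //.
by rewrite -(mulmxA _ kv kv^T) kvkvT mulmx1 inK_a_v_commute.
Qed.

Let kvT_e : kv^T *m (normv R v *: e_last R n) = intmx R v.
Proof. by case: hkv => _ <-; rewrite mulmxA kvTkv mul1mx. Qed.

Lemma inK_conjg_kv (g : 'M[R]_(n.+2)) : inHv v g -> inK (kv *m g *m kv^T).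
Proof.
case: hkv => kv_SO _ [g_SO g_v]; split.
  by apply: SOmxM; [exact: SOmxM | exact: SOmx_tr].
apply: (scalerI (normv_neq0 prim_v hkv)).
by rewrite scalemxAr -!mulmxA kvT_e g_v; case: hkv.
Qed.

Lemma inHv_conjg_kv (k : 'M[R]_(n.+2)) : inK k -> inHv v (kv^T *m k *m kv).
Proof.
case: hkv => kv_SO kv_v [k_SO k_e]; split.
  by apply: SOmxM; [apply: SOmxM k_SO; exact: SOmx_tr | exact: kv_SO].
by rewrite -!mulmxA kv_v -scalemxAr k_e kvT_e.
Qed.

Lemma inO_covered (M : seq 'M[F]_(n.+2)) (x : Gel R F n) :
  double_coset_reps p abs iota v M -> inO p iota v gv kv x ->
  exists2 h, h \in M & inOh p abs iota v gv kv h x.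
Proof.
case=> _ cover _ [l [c1 [c2 [[hr [hp [hr_Hv hp_Hv ->]]] c12 ->]]]].
have [h hM [a [c [a_Zp c_Z1p ->]]]] := cover hp hp_Hv.
set cr : 'M[R]_(n.+2) := map_mx ratr c.
have cr_Hv : inHv v cr by apply: inHv_map; case: c_Z1p.
have crTcr : cr^T *m cr = 1%:M by case: cr_Hv => -[].
exists h => //; exists (kv *m (hr *m cr^T) *m kv^T), a, (c *m c1), (conjg_v gv c *m c2).
have k_K := inK_conjg_kv (inHvM hr_Hv (inHv_tr cr_Hv)).
split=> //; first exact: inGZ1pM (inGZ1p_conjg_v _ _ _ c_Z1p) c12.
rewrite gamM -gmulA; congr gmul.
rewrite DeltaK_Lv_shifted // gam_conjg_v gmulA Lv_ofM conjg_kvK.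
by rewrite -(mulmxA hr) crTcr mulmx1.
Qed.

Lemma inOh_inO (h : 'M[F]_(n.+2)) (x : Gel R F n) :
  inHv v h -> inOh p abs iota v gv kv h x -> inO p iota v gv kv x.
Proof.
move=> h_Hv [k [h' [c1 [c2 [k_K h'_Zp c12 ->]]]]].
exists (Lv_of (kv^T *m k *m kv) (h' *m h)), c1, c2; split=> //.
  exists (kv^T *m k *m kv), (h' *m h); split=> //; first exact: inHv_conjg_kv.
  by apply: inHvM h_Hv; case: h'_Zp.
by rewrite DeltaK_Lv_shifted.
Qed.

Lemma inOh_inDC (h h' : 'M[F]_(n.+2)) (x : Gel R F n) : is_Qp p abs iota ->
  inOh p abs iota v gv kv h x -> inOh p abs iota v gv kv h' x -> inDC p abs iota v h h'.
Proof.
move=> [[abs_eq0 abs_ge0 absM abs_ultra _] _].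
move=> [k1 [a1 [c1 [c2 [k1_K [a1_Hv a1_Zp] c12 ->]]]]].
move=> [k2 [a2 [d1 [d2 [k2_K [a2_Hv a2_Zp] d12]]]]].
rewrite !DeltaK_Lv_shifted // => -[real_eq padic_eq _ _].
case: c12 => c1_Z1p _ _ _; case: d12 => d1_Z1p _ d1_SO _.
exists (a2^T *m a1), (c1 *m d1^T); split.
- split; first exact: inHvM (inHv_tr a2_Hv) a1_Hv.
  exact: mxZpM (mxZp_tr a2_Zp) a1_Zp.
- split; last exact: mxZ1pM (mxZ1p_tr _).
  apply: (@inHv_map_inj _ _ _ R ratr); rewrite map_mxM -map_trmx.
  set g1 := kv^T *m k1 *m kv in real_eq *; set g2 := kv^T *m k2 *m kv in real_eq *.
  have g_eq : g1 *m map_mx ratr c1 = g2 *m map_mx ratr d1.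
    by move: real_eq; rewrite -!mulmxA => /(congr1 (mulmx kv^T)); rewrite !mulmxA kvTkv !mul1mx.
  have [[g1Tg1 _] _] := inHv_conjg_kv k1_K.
  have d1r_tr := SOmx_mulmx_tr (SOmx_map (ratr : {rmorphism rat -> R}) d1_SO).
  rewrite -[map_mx _ c1]mul1mx -g1Tg1 -(mulmxA g1^T) g_eq -(mulmxA g1^T) -(mulmxA g2) d1r_tr mulmx1.
  exact: inHvM (inHv_tr (inHv_conjg_kv k1_K)) (inHv_conjg_kv k2_K).
- have [[a2Ta2 _] _] := a2_Hv.
  have d1p_tr := SOmx_mulmx_tr (SOmx_map iota d1_SO).
  move: padic_eq; rewrite !mul1mx map_mxM -map_trmx mulmxA -(mulmxA a2^T a1 h).
  rewrite -(mulmxA a2^T (a1 *m h)) => ->.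
  by rewrite !mulmxA a2Ta2 mul1mx -mulmxA d1p_tr mulmx1.
Qed.

End Orbit.

Theorem lemma3p4 (R : realType) (F : fieldType) (p : nat) (abs : F -> R)
    (iota : {rmorphism rat -> F}) (HQp : is_Qp p abs iota)
    (p_prime : prime p) (p_odd : odd p)
    (n : nat) (v : 'cV[int]_(n.+2)) (hv : primitive v)
    (gv : 'M[int]_(n.+2)) (hgv : good_gv v gv)
    (kv : 'M[R]_(n.+2)) (hkv : good_kv v kv)
    (M : seq 'M[F]_(n.+2)) (hM : double_coset_reps p abs iota v M) :
  (forall x : Gel R F n,
     inO p iota v gv kv x <-> exists2 h, h \in M & inOh p abs iota v gv kv h x) /\
  (forall h h', h \in M -> h' \in M -> h <> h' ->
     forall x : Gel R F n, inOh p abs iota v gv kv h x -> inOh p abs iota v gv kv h' x -> False).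
Proof.
have [M_Hv _ M_disjoint] := hM.
split=> [x | h h' hM_h hM_h' neq_hh' x x_h x_h'].
  split; first exact: inO_covered.
  by case=> h /M_Hv; apply: inOh_inO.
apply: (M_disjoint h h' hM_h hM_h' neq_hh' h').
  exact: inOh_inDC HQp x_h x_h'.
exact: inDC_refl HQp (M_Hv h' hM_h').
Qed.
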